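(* Let $q\ge2$ and let $(w_{n_k})_{k\ge1}$ be a $q$-lacunary sequence of Walsh functions. Then for every $M\ge1$ and all real numbers $a_1,\dots,a_M$, the functions $R_M=\sum_{k=1}^Ma_kr_k$ and $W_M=\sum_{k=1}^Ma_kw_{n_k}$ have the same distribution function on $[0,1]$ (i.e. $m(\{|R_M|>\lambda\})=m(\{|W_M|>\lambda\})$ for all $\lambda>0$).
   Context: $m$ is Lebesgue measure on $[0,1]$. Rademacher functions $r_k(t)=\mathrm{sign}\sin(2^k\pi t)$, $k\ge1$. Walsh functions (Paley numbering): $w_0=1$ and for $k=a_12^0+\dots+a_n2^{n-1}$ with $a_i\in\{0,1\}$, $w_k=r_1^{a_1}\cdots r_n^{a_n}$. A sequence $(w_{n_k})$ is $q$-lacunary if $n_{k+1}/n_k\ge q$ for all $k\ge1$. *)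

From HB Require Import structures.
From mathcomp Require Import all_boot all_order all_algebra.
From mathcomp Require Import all_classical all_reals all_analysis.
Set Implicit Arguments. Unset Strict Implicit. Unset Printing Implicit Defensive.
Import Order.TTheory GRing.Theory Num.Theory.
Local Open Scope ring_scope.

Definition rademacher {R : realType} (k : nat) (t : R) : R :=
  Num.sg (sin (2%:R ^+ k * pi * t)).

(* Walsh function (Paley numbering): for n = sum_i a_i 2^(i-1) (i >= 1),
   w_n = prod_i r_i^{a_i}.  The binary digit of weight 2^i is odd (n %/ 2^i),
   and it multiplies r_(i+1).  Indices i >= n contribute digit 0, so the
   product over i < n covers all digits; w_0 = 1 (empty product). *)
Definition walsh {R : realType} (n : nat) (t : R) : R :=
  \prod_(i < n | odd (n %/ 2 ^ i)) rademacher i.+1 t.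

(* q-lacunary sequence of indices (n_k)_{k>=1}: n_{k+1}/n_k >= q for k >= 1.
   (the indices are required positive so that the ratio makes sense) *)
Definition lacunary {R : realType} (q : R) (n : nat -> nat) : Prop :=
  (forall k, (1 <= k)%N -> (0 < n k)%N) /\
  (forall k, (1 <= k)%N -> q <= (n k.+1)%:R / (n k)%:R).

From HB Require Import structures.
From mathcomp Require Import all_boot all_order all_algebra.
From mathcomp Require Import all_classical all_reals all_analysis.
From mathcomp Require Import ring lra zify.
Import Order.TTheory GRing.Theory Num.Theory.
Local Open Scope classical_set_scope.
Local Open Scope ring_scope.
Set Implicit Arguments. Unset Strict Implicit. Unset Printing Implicit Defensive.

(* On an open dyadic interval of length 2^-N, r_(i+1) (i < N) equals (-1)^x_i,
   x_i the i-th binary digit of the interval, and w_n (n <= N) equals (-1) to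
   the sum in F_2 of the x_i over the binary digits i of n.  So R_M and W_M are
   the same function of L x in F_2^M, where the F_2-linear map L keeps the first
   M digits for R_M and has the binary expansions of the n_k as rows for W_M.
   Both maps are onto (for W_M because q >= 2 makes the leading digits of the
   n_k distinct, so L is triangular), hence all their fibres have 2^(N-M)
   points, and the two level sets are unions of equally many dyadic intervals
   up to finitely many endpoints.  As r_(k+1) = w_(2^k), both are instances of
   one statement about doubling sequences. *)

Section BooleanVectors.
Variables N M : nat.

Lemma card_preim_additive_surj (L : {ffun 'I_N -> bool} -> {ffun 'I_M -> bool}) :
  {morph L : f f' / f + f'} -> (forall g, exists f, L f = g) ->
  forall P : pred {ffun 'I_M -> bool},
  #|[pred f | P (L f)]| = (#|[pred f | L f == 0%R]| * #|P|)%N.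
Proof.
move=> L_add L_surj P.
rewrite -sum1_card (eq_bigl (fun f => P (L f))) => [|f]; last by rewrite inE.
rewrite (partition_big L P) //= -sum1_card mulnC -sum_nat_const.
apply: eq_bigr => g Pg.
rewrite (eq_bigl (fun f => L f == g)) => [|f]; last first.
  by case: (eqVneq (L f) g) => [->|]; rewrite ?Pg ?andbF.
have [f0 <-] := L_surj g.
rewrite (reindex_inj (addIr f0)); apply: eq_bigl => f /=.
by rewrite L_add inE -subr_eq0 addrK.
Qed.

Lemma card_preim_additive_surj_eq (L L' : {ffun 'I_N -> bool} -> {ffun 'I_M -> bool}) :
  {morph L : f f' / f + f'} -> (forall g, exists f, L f = g) ->
  {morph L' : f f' / f + f'} -> (forall g, exists f, L' f = g) ->
  forall P : pred {ffun 'I_M -> bool},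
  #|[pred f | P (L f)]| = #|[pred f | P (L' f)]|.
Proof.
move=> L_add L_surj L'_add L'_surj P.
have card_all K : #|[pred f : {ffun 'I_N -> bool} | predT (K f)]| = #|{ffun 'I_N -> bool}|.
  exact: eq_card.
have := card_preim_additive_surj L_add L_surj predT.
have := card_preim_additive_surj L'_add L'_surj predT.
rewrite !card_all => -> /eqP; rewrite eqn_pmul2r => [/eqP ker_eq|]; last first.
  by rewrite (eq_card (B := {ffun 'I_M -> bool})) // card_ffun card_bool expn_gt0.
rewrite (card_preim_additive_surj L_add L_surj) (card_preim_additive_surj L'_add L'_surj).
by rewrite ker_eq.
Qed.

(* The map [f |-> f + Z'] with [Z' i] the sum of the [Z k f] over [h k = i] is
   injective (compare two preimages coordinate by coordinate, from the left),
   hence onto. *)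
Lemma triangular_surj (h : 'I_M -> 'I_N) (Z : 'I_M -> {ffun 'I_N -> bool} -> bool) :
  injective h ->
  (forall k (f f' : {ffun 'I_N -> bool}),
     (forall i : 'I_N, (i < h k)%N -> f i = f' i) -> Z k f = Z k f') ->
  forall g : {ffun 'I_M -> bool},
  exists f : {ffun 'I_N -> bool}, [ffun k => f (h k) + Z k f] = g.
Proof.
move=> h_inj Z_loc g.
pose T (f : {ffun 'I_N -> bool}) : {ffun 'I_N -> bool} :=
  [ffun i => f i + \sum_(k | h k == i) Z k f].
have T_inj : injective T.
  move=> f f' eq_T; apply/ffunP.
  suff eq_lt m (i : 'I_N) : (i < m)%N -> f i = f' i by move=> i; apply: (eq_lt i.+1).
  elim: m i => [//|m IHm] i; rewrite ltnS leq_eqVlt => /orP[/eqP def_i|]; last exact: IHm.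
  have := congr1 (fun F : {ffun 'I_N -> bool} => F i) eq_T; rewrite !ffunE.
  rewrite (eq_bigr (fun k => Z k f')) => [/addIr //|k /eqP hk].
  by apply: Z_loc => i' lt_i'; apply: IHm; rewrite -def_i -hk.
have [T' _ T'K] := inj_card_bij T_inj (leqnn _).
pose g' : {ffun 'I_N -> bool} := [ffun i => \sum_(k | h k == i) g k].
exists (T' g'); set f := T' _.
have sum_h (F : 'I_M -> bool) k : \sum_(k' | h k' == h k) F k' = F k.
  by rewrite (big_pred1 k) // => k'; rewrite /= (inj_eq h_inj).
apply/ffunP => k; have := congr1 (fun F : {ffun 'I_N -> bool} => F (h k)) (T'K g').
by rewrite -/f !ffunE !sum_h.
Qed.

End BooleanVectors.

Lemma odd_divn_exp2_trunc_log m : (0 < m)%N -> odd (m %/ 2 ^ trunc_log 2 m).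
Proof.
move=> m_gt0; have lo := trunc_logP (isT : (1 < 2)%N) m_gt0.
have hi := trunc_log_ltn m (isT : (1 < 2)%N).
have lt2 : (m %/ 2 ^ trunc_log 2 m < 2)%N by rewrite ltn_divLR ?expn_gt0 // -expnS.
have gt0 : (0 < m %/ 2 ^ trunc_log 2 m)%N by rewrite divn_gt0 ?expn_gt0.
by have -> : (m %/ 2 ^ trunc_log 2 m = 1)%N by lia.
Qed.

Lemma leq_trunc_log2_odd_divn m i : odd (m %/ 2 ^ i) -> (i <= trunc_log 2 m)%N.
Proof.
rewrite leqNgt; apply: contraL => lt_i; rewrite divn_small //.
exact: leq_trans (trunc_log_ltn m (isT : (1 < 2)%N)) (leq_pexp2l (isT : (0 < 2)%N) lt_i).
Qed.

Lemma trunc_log2_lt_double m m' :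
  (0 < m)%N -> (m.*2 <= m')%N -> (trunc_log 2 m < trunc_log 2 m')%N.
Proof. by move=> m_gt0 le_m'; rewrite -trunc_log2_double // leq_trunc_log. Qed.

Definition walsh_code {N M : nat} (m : nat -> nat) (f : {ffun 'I_N -> bool}) :
    {ffun 'I_M -> bool} :=
  [ffun k : 'I_M => \sum_(i < N | odd (m k %/ 2 ^ i)) f i].

Lemma walsh_code_add N M m : {morph @walsh_code N M m : f f' / f + f'}.
Proof.
move=> f f'; apply/ffunP => k; rewrite !ffunE -big_split.
by apply: eq_bigr => i _; rewrite ffunE.
Qed.

Lemma walsh_code_surj N M (m : nat -> nat) :
  (forall k : 'I_M, 0 < m k <= N)%N ->
  injective (fun k : 'I_M => trunc_log 2 (m k)) ->
  forall g, exists f : {ffun 'I_N -> bool}, walsh_code m f = g :> {ffun 'I_M -> bool}.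
Proof.
move=> m_bnd lead_inj g.
have lead_lt (k : 'I_M) : (trunc_log 2 (m k) < N)%N.
  have /andP[m_gt0 m_le] := m_bnd k.
  apply: leq_trans (ltn_expl _ (isT : (1 < 2)%N)) _.
  exact: leq_trans (trunc_logP (isT : (1 < 2)%N) m_gt0) m_le.
pose h k := Ordinal (lead_lt k).
pose Z k (f : {ffun 'I_N -> bool}) :=
  (\sum_(i < N | (i < h k)%N && odd (m k %/ 2 ^ i)) f i)%R.
have h_inj : injective h by move=> k k' /(congr1 val) /lead_inj.
have Z_loc k (f f' : {ffun 'I_N -> bool}) :
    (forall i : 'I_N, (i < h k)%N -> f i = f' i) -> Z k f = Z k f'.
  by move=> eq_ff'; apply: eq_bigr => i /andP[/eq_ff'].
have [f <-] := triangular_surj h_inj Z_loc g.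
exists f; apply/ffunP => k; rewrite !ffunE (bigD1 (h k)) /=; last first.
  by apply: odd_divn_exp2_trunc_log; have /andP[] := m_bnd k.
congr (_ + _); apply: eq_bigl => i.
case odd_i: (odd _); rewrite ?andbF ?andbT //=.
by rewrite -val_eqE /= ltn_neqAle leq_trunc_log2_odd_divn // andbT.
Qed.

Lemma walsh_code_surj_doubling N M (m : nat -> nat) :
  (forall k, 0 < m k)%N -> (forall k, (m k).*2 <= m k.+1)%N ->
  (forall k : 'I_M, m k <= N)%N ->
  forall g, exists f : {ffun 'I_N -> bool}, walsh_code m f = g :> {ffun 'I_M -> bool}.
Proof.
move=> m_gt0 m_dbl m_le; apply: walsh_code_surj => [k|i j eq_ij].
  by rewrite m_gt0 m_le.
have lead_lt : {homo (fun k => trunc_log 2 (m k)) : i j / (i < j)%N}.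
  apply: homo_ltn => [y x z|k]; first exact: ltn_trans.
  exact: trunc_log2_lt_double (m_gt0 k) (m_dbl k).
by apply: ord_inj; case: (ltngtP i j) => // /lead_lt; rewrite eq_ij ltnn.
Qed.

Lemma eq_from_binary_digits N (j j' : nat) : (j < 2 ^ N)%N -> (j' < 2 ^ N)%N ->
  (forall p, (p < N)%N -> odd (j %/ 2 ^ p) = odd (j' %/ 2 ^ p)) -> j = j'.
Proof.
elim: N j j' => [|N IHN] j j'; first by rewrite !ltnS !leqn0 => /eqP-> /eqP->.
rewrite expnS => lt_j lt_j' eq_digits.
have eq_half : (j %/ 2 = j' %/ 2)%N.
  apply: IHN; rewrite ?ltn_divLR // 1?mulnC // => p lt_p.
  by rewrite -!divnMA -expnS; apply: eq_digits.
have eq_odd : odd j = odd j' by have := eq_digits 0%N isT; rewrite !divn1.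
by rewrite -[j]odd_double_half -[j']odd_double_half -!divn2 eq_half eq_odd.
Qed.

(* [dyadic_digits j i] is the [i.+1]-th binary digit of [j / 2 ^ N] after the point. *)
Definition dyadic_digits N (j : 'I_(2 ^ N)) : {ffun 'I_N -> bool} :=
  [ffun i : 'I_N => odd (j %/ 2 ^ (N - i.+1))].

Lemma dyadic_digits_inj N : injective (@dyadic_digits N).
Proof.
move=> j j' eq_jj'; apply/val_inj/(eq_from_binary_digits (ltn_ord j) (ltn_ord j')) => p lt_p.
have lt_i : (N - p.+1 < N)%N by lia.
have := congr1 (fun f : {ffun 'I_N -> bool} => f (Ordinal lt_i)) eq_jj'.
by rewrite !ffunE /= (_ : N - (N - p.+1).+1 = p)%N //; lia.
Qed.

Lemma card_dyadic_digits N (P : pred {ffun 'I_N -> bool}) :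
  #|[pred j | P (dyadic_digits j)]| = #|P|.
Proof.
have digits_bij : bijective (@dyadic_digits N).
  apply: inj_card_bij; first exact: dyadic_digits_inj.
  by rewrite card_ffun card_bool !card_ord.
rewrite -!sum1_card (reindex _ (onW_bij _ digits_bij)).
by apply: eq_bigl => j; rewrite !inE.
Qed.

Section Dyadic.
Variable R : realType.

Definition dyadic_itv (N j : nat) : interval R := `]j%:R / 2 ^+ N, j.+1%:R / 2 ^+ N[.

Lemma mem_dyadic_itv N j (t : R) :
  (t \in dyadic_itv N j) = (j%:R < t * 2 ^+ N < j.+1%:R).
Proof. by rewrite in_itv /= ltr_pdivrMr ?ltr_pdivlMr ?exprn_gt0. Qed.

Lemma dyadic_itv_inj N i j (t : R) :
  t \in dyadic_itv N i -> t \in dyadic_itv N j -> i = j.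
Proof.
rewrite !mem_dyadic_itv => /andP[lt_it lt_ti] /andP[lt_jt lt_tj].
have := lt_trans lt_it lt_tj; have := lt_trans lt_jt lt_ti.
by rewrite !ltr_nat !ltnS => le_ji le_ij; apply/eqP; rewrite eqn_leq le_ij le_ji.
Qed.

Lemma dyadic_itv_subset_unit N (j : 'I_(2 ^ N)) (t : R) :
  t \in dyadic_itv N j -> 0 <= t <= 1.
Proof.
rewrite mem_dyadic_itv => /andP[lt_jt lt_tj].
have c_gt0 : (0 : R) < 2 ^+ N by rewrite exprn_gt0.
rewrite -(pmulr_lge0 _ c_gt0) (le_trans _ (ltW lt_jt)) //=.
rewrite -(ler_pM2r c_gt0) mul1r (le_trans (ltW lt_tj)) //.
by rewrite -natrX ler_nat.
Qed.

Lemma dyadic_itv_cover N (t : R) : 0 <= t <= 1 ->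
  (exists j : 'I_(2 ^ N), t \in dyadic_itv N j) \/
  exists2 j, (j < (2 ^ N).+1)%N & t = j%:R / 2 ^+ N.
Proof.
move=> /andP[t_ge0 t_le1].
have c_gt0 : (0 : R) < 2 ^+ N by rewrite exprn_gt0.
have tc_le : t * 2 ^+ N <= (2 ^ N)%:R by rewrite natrX -[leRHS]mul1r ler_pM2r.
have /andP[] := truncn_itv (mulr_ge0 t_ge0 (ltW c_gt0)).
set j := Num.truncn _; rewrite le_eqVlt => /orP[/eqP eq_jt _ | lt_jt lt_tj].
  right; exists j; first by rewrite ltnS -(ler_nat R) eq_jt.
  by rewrite eq_jt mulfK ?gt_eqF.
have lt_j : (j < 2 ^ N)%N by rewrite -(ltr_nat R) (lt_le_trans lt_jt).
by left; exists (Ordinal lt_j); rewrite mem_dyadic_itv lt_jt lt_tj.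
Qed.

Lemma lebesgue_measure_dyadic_itvs N (P : pred 'I_(2 ^ N)) :
  lebesgue_measure (\big[setU/set0]_(j < 2 ^ N | P j) [set` dyadic_itv N j]) =
  (#|P|%:R / 2 ^+ N)%:E.
Proof.
rewrite measure_bigsetU_ord_cond => [||i j _ _ [t [t_i t_j]]]; last 2 first.
- by move=> j _; exact: measurable_itv.
- exact/val_inj/(dyadic_itv_inj t_i t_j).
rewrite (eq_bigr (fun _ => (2 ^+ N)^-1%:E)) => [|j _]; last first.
  rewrite /= lebesgue_measure_itv /= lte_fin ltr_pM2r ?invr_gt0 ?exprn_gt0 //.
  by rewrite ltr_nat ltnSn -EFinD -mulrBl -natrB // subSnn mul1r.
by rewrite sumEFin sumr_const mulr_natl.
Qed.

Lemma lebesgue_measure_dyadic_set N (Q : R -> Prop) (P : pred 'I_(2 ^ N)) :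
  (forall (j : 'I_(2 ^ N)) t, t \in dyadic_itv N j -> Q t <-> P j) ->
  lebesgue_measure [set t : R | 0 <= t <= 1 /\ Q t] = (#|P|%:R / 2 ^+ N)%:E.
Proof.
move=> QP; set S := [set t | _].
pose U := \big[setU/set0]_(j < 2 ^ N | P j) [set` dyadic_itv N j].
pose D := (fun j : nat => j%:R / 2 ^+ N : R) @` `I_(2 ^ N).+1.
have SD_countable : countable (S `&` D).
  exact/finite_set_countable/(sub_finite_set (@subIsetr _ S D))/finite_image/finite_II.
have -> : S = U `|` (S `&` D).
  rewrite /U -bigcup_seq_cond; apply/seteqP; split => t.
  - case=> t01 Qt; have [[j t_j]|[j lt_j def_t]] := dyadic_itv_cover N t01.
      by left; exists j => //=; rewrite mem_index_enum; apply/(QP j t t_j).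
    by right; split; [split | exists j].
  - case=> [[j /= /andP[_ Pj] t_j]|[]//].
    by split; [exact: dyadic_itv_subset_unit t_j | apply/(QP j t t_j)].
rewrite measureU0.
- exact: lebesgue_measure_dyadic_itvs.
- by apply: bigsetU_measurable => j _; exact: measurable_itv.
- by apply: countable_measurable => // t; exact: measurable_set1.
- exact: countable_lebesgue_measure0.
Qed.

Lemma rademacher_dyadic N (j : 'I_(2 ^ N)) (i : 'I_N) (t : R) :
  t \in dyadic_itv N j -> rademacher i.+1 t = (-1) ^+ dyadic_digits j i.
Proof.
rewrite mem_dyadic_itv ffunE => /andP[lt_jt lt_tj].
set e := (N - i.+1)%N; set m := (j %/ 2 ^ e)%N.
have def_N : N = (i.+1 + e)%N by rewrite /e subnKC.
have e_gt0 : (0 : R) < 2 ^+ e by rewrite exprn_gt0.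
have le_mj : m%:R * 2 ^+ e <= j%:R :> R by rewrite -natrX -natrM ler_nat leq_divM.
have le_jm : j.+1%:R <= m.+1%:R * 2 ^+ e :> R.
  by rewrite -natrX -natrM ler_nat ltn_ceil ?expn_gt0.
set x := 2 ^+ i.+1 * t.
have xe : x * 2 ^+ e = t * 2 ^+ N by rewrite /x mulrAC -exprD -def_N mulrC.
have lt_mx : m%:R < x by rewrite -(ltr_pM2r e_gt0) xe (le_lt_trans le_mj).
have lt_xm : x < m.+1%:R by rewrite -(ltr_pM2r e_gt0) xe (lt_le_trans lt_tj).
rewrite /rademacher (_ : _ * pi * t = (x - m%:R) * pi + pi *+ m); last first.
  by rewrite /x -mulr_natr; ring.
rewrite (alternatingn (@sinDpi R)) sgrM -signr_odd sgrX sgrN1 gtr0_sg ?mulr1 //.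
apply: sin_gt0_pi; rewrite mulr_gt0 ?pi_gt0 ?subr_gt0 //=.
rewrite -[ltRHS]mul1r ltr_pM2r ?pi_gt0 //.
by move: lt_xm; rewrite -natr1; lra.
Qed.

Lemma walsh_dyadic N (j : 'I_(2 ^ N)) m (t : R) : (m <= N)%N ->
  t \in dyadic_itv N j ->
  walsh m t = (-1) ^+ ((\sum_(i < N | odd (m %/ 2 ^ i)) dyadic_digits j i)%R : bool).
Proof.
move=> le_mN t_j; rewrite /walsh.
rewrite (big_ord_widen_cond N (fun i => odd (m %/ 2 ^ i)) (fun i => rademacher i.+1 t)) //.
rewrite (eq_bigl (fun i : 'I_N => odd (m %/ 2 ^ i))) => [|i]; last first.
  case odd_i: (odd _); rewrite ?andbF ?andbT //=; apply: contraTT odd_i.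
  rewrite -leqNgt => le_mi; rewrite divn_small //.
  exact: leq_trans (ltn_expl m (isT : (1 < 2)%N)) (leq_pexp2l (isT : (0 < 2)%N) le_mi).
rewrite (eq_bigr _ (fun i _ => rademacher_dyadic i t_j)).
have sign_add : {morph (fun b : bool => (-1) ^+ b : R) : b b' / (b + b')%R >-> b * b'}.
  by move=> b b'; exact: signr_addb.
have sign0 : (fun b : bool => (-1) ^+ b : R) 0%R = 1 by rewrite /= expr0.
by rewrite (big_morph _ sign_add sign0).
Qed.

Lemma walsh_exp2 k (t : R) : walsh (2 ^ k) t = rademacher k.+1 t.
Proof.
have odd_div i : odd (2 ^ k %/ 2 ^ i) = (i == k).
  case: (ltngtP i k) => [lt_ik|lt_ki|->]; last by rewrite divnn expn_gt0.
  - by rewrite -expnB ?(ltnW lt_ik) // oddX subn_eq0 leqNgt lt_ik.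
  - by rewrite divn_small ?ltn_exp2l.
by rewrite /walsh (big_pred1 (Ordinal (ltn_expl k (isT : (1 < 2)%N))) odd_div).
Qed.

Lemma lebesgue_measure_walsh_sum N M (m : nat -> nat) (a : nat -> R) (P : pred R) :
  (forall k : 'I_M, m k <= N)%N ->
  lebesgue_measure [set t : R | 0 <= t <= 1 /\ P (\sum_(k < M) a k * walsh (m k) t)] =
  (#|[pred f : {ffun 'I_N -> bool} |
       P (\sum_(k < M) a k * (-1) ^+ walsh_code m f k)]|%:R / 2 ^+ N)%:E.
Proof.
move=> m_le; rewrite -card_dyadic_digits.
apply: lebesgue_measure_dyadic_set => j t t_j; rewrite inE /=.
suff -> : \sum_(k < M) a k * walsh (m k) t =
          \sum_(k < M) a k * (-1) ^+ walsh_code m (dyadic_digits j) k by [].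
by apply: eq_bigr => k _; rewrite ffunE (walsh_dyadic (m_le k) t_j).
Qed.

Lemma walsh_sums_equidistributed (m m' : nat -> nat) M (a : nat -> R) (P : pred R) :
  (forall k, 0 < m k)%N -> (forall k, (m k).*2 <= m k.+1)%N ->
  (forall k, 0 < m' k)%N -> (forall k, (m' k).*2 <= m' k.+1)%N ->
  lebesgue_measure [set t : R | 0 <= t <= 1 /\ P (\sum_(k < M) a k * walsh (m k) t)] =
  lebesgue_measure [set t : R | 0 <= t <= 1 /\ P (\sum_(k < M) a k * walsh (m' k) t)].
Proof.
move=> m_gt0 m_dbl m'_gt0 m'_dbl.
pose N := (\max_(k < M) maxn (m k) (m' k))%N.
have le_N (k : 'I_M) : (maxn (m k) (m' k) <= N)%N by exact: leq_bigmax.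
have m_le (k : 'I_M) : (m k <= N)%N := leq_trans (leq_maxl _ _) (le_N k).
have m'_le (k : 'I_M) : (m' k <= N)%N := leq_trans (leq_maxr _ _) (le_N k).
rewrite (lebesgue_measure_walsh_sum a P m_le) (lebesgue_measure_walsh_sum a P m'_le).
pose Q := [pred g : {ffun 'I_M -> bool} | P (\sum_(k < M) a k * (-1) ^+ g k)].
congr ((_%:R / _)%:E); apply: (card_preim_additive_surj_eq _ _ _ _ Q).
- exact: walsh_code_add.
- exact: walsh_code_surj_doubling.
- exact: walsh_code_add.
- exact: walsh_code_surj_doubling.
Qed.

End Dyadic.

Lemma lacunary_double (R : realType) (q : R) (n : nat -> nat) :
  2 <= q -> lacunary q n -> forall k, (1 <= k)%N -> ((n k).*2 <= n k.+1)%N.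
Proof.
move=> q_ge2 [n_gt0 n_ratio] k k_ge1.
have := n_ratio k k_ge1; rewrite ler_pdivlMr ?ltr0n ?n_gt0 // => le_qn.
rewrite -(ler_nat R) -mul2n natrM; apply: le_trans le_qn.
by rewrite ler_wpM2r.
Qed.

Theorem lemma3p4 (R : realType) (q : R) (n : nat -> nat)
  (hq : 2 <= q) (hlac : lacunary q n) (M : nat) (hM : (1 <= M)%N)
  (a : nat -> R) (lam : R) (hlam : 0 < lam) :
  lebesgue_measure [set t : R | 0 <= t <= 1 /\
     lam < `| \sum_(1 <= k < M.+1) a k * rademacher k t |] =
  lebesgue_measure [set t : R | 0 <= t <= 1 /\
     lam < `| \sum_(1 <= k < M.+1) a k * walsh (n k) t |].
Proof.
pose P := [pred x : R | lam < `|x|].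
have -> : [set t : R | 0 <= t <= 1 /\ lam < `|\sum_(1 <= k < M.+1) a k * rademacher k t|] =
          [set t | 0 <= t <= 1 /\ P (\sum_(k < M) a k.+1 * walsh (2 ^ k) t)].
  apply/funext => t /=; rewrite big_add1 big_mkord.
  by under eq_bigr do rewrite walsh_exp2.
have -> : [set t : R | 0 <= t <= 1 /\ lam < `|\sum_(1 <= k < M.+1) a k * walsh (n k) t|] =
          [set t | 0 <= t <= 1 /\ P (\sum_(k < M) a k.+1 * walsh (n k.+1) t)].
  by apply/funext => t /=; rewrite big_add1 big_mkord.
apply: (walsh_sums_equidistributed (m := fun k => (2 ^ k)%N) (m' := fun k => n k.+1)
          M (fun k => a k.+1) P) => k.
- by rewrite expn_gt0.
- by rewrite -mul2n expnS.
- exact: hlac.1 k.+1 isT.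
- exact: lacunary_double hq hlac k.+1 isT.
Qed.
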